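(* Let $q\ge2$, let $U_1,\dots,U_q\in U(q)$ be arbitrary and let $D=\sum_{j=1}^q|j\rangle\langle j|\otimes U_j$ (the block-diagonal unitary $\bigoplus_j U_j$). Then $SD$ and $DS$ are dual-unitary, and $$\mathcal{M}_+^{DS}(a)_{jk}=\frac1q\operatorname{tr}(U_j^\dagger U_k)\,a_{jk}\quad(1\le j,k\le q),\qquad \mathcal{M}_+^{SD}(a)=\frac1q\sum_{j=1}^q U_j^\dagger a\,U_j .$$ In particular the eigenvalues of $\mathcal{M}_+^{DS}$ are the $q^2$ numbers $\frac1q\operatorname{tr}(U_j^\dagger U_k)$, $1\le j,k\le q$; at least $q$ of them equal $1$, and if the $U_j$ are pairwise orthogonal in the Hilbert–Schmidt inner product then all the others are $0$.
   Context: Product basis $|i\alpha\rangle$ of $\mathbb{C}^q\otimes\mathbb{C}^q$; realignment $\langle\beta\alpha|X^{R_1}|ji\rangle=\langle i\alpha|X|j\beta\rangle$; a unitary $U$ is dual-unitary if $U^{R_1}$ is unitary. $S$ is the swap operator. For unitary $U$, $\mathcal{M}_+^U(a)=\frac1q\operatorname{tr}_1[U^\dagger(a\otimes I)U]$ for $q\times q$ matrices $a$, where $\operatorname{tr}_1$ is the partial trace over the first factor. *)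

(* Complex scalars: an arbitrary numClosedFieldType C
   (e.g. algC, or complex R for a real closed field R). *)
From HB Require Import structures.
From mathcomp Require Import all_boot all_order all_algebra.
From mathcomp Require Import sesquilinear spectral.
Set Implicit Arguments. Unset Strict Implicit. Unset Printing Implicit Defensive.
Import Order.TTheory GRing.Theory Num.Theory.
Local Open Scope ring_scope.
Local Open Scope sesquilinear_scope.

Section Defs.
Variables (C : numClosedFieldType) (q : nat).

(* product basis vector |i alpha> of C^q (x) C^q : index i*q + alpha *)
Definition kidx (i a : 'I_q) : 'I_(q * q) := mxvec_index i a.

Definition realign (X : 'M[C]_(q * q)) : 'M[C]_(q * q) :=
  \sum_(i < q) \sum_(a < q) \sum_(j < q) \sum_(b < q)
     X (kidx i a) (kidx j b) *: delta_mx (kidx b a) (kidx j i).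

Definition dual_unitary (U : 'M[C]_(q * q)) : Prop :=
  U \is unitarymx /\ realign U \is unitarymx.

Definition swapmx : 'M[C]_(q * q) :=
  \sum_(i < q) \sum_(a < q) delta_mx (kidx a i) (kidx i a).

Definition tens_id (x : 'M[C]_q) : 'M[C]_(q * q) :=
  \sum_(i < q) \sum_(j < q) \sum_(a < q) x i j *: delta_mx (kidx i a) (kidx j a).

Definition ptrace1 (X : 'M[C]_(q * q)) : 'M[C]_q :=
  \matrix_(a < q, b < q) \sum_(i < q) X (kidx i a) (kidx i b).

Definition Mplus (U : 'M[C]_(q * q)) (x : 'M[C]_q) : 'M[C]_q :=
  q%:R^-1 *: ptrace1 (U ^t* *m tens_id x *m U).

Definition blockdiag (Us : 'I_q -> 'M[C]_q) : 'M[C]_(q * q) :=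
  \sum_(j < q) \sum_(a < q) \sum_(b < q)
     Us j a b *: delta_mx (kidx j a) (kidx j b).

End Defs.

From HB Require Import structures.
From mathcomp Require Import all_boot all_order all_algebra.
From mathcomp Require Import sesquilinear spectral.
Import Order.TTheory GRing.Theory Num.Theory.
Local Open Scope ring_scope.
Local Open Scope sesquilinear_scope.

(* Everything follows from the entries in the product basis:
   <m c|DS|n d> = [d = m] (U_m)_{cn} and <m c|SD|n d> = [c = n] (U_c)_{md}.
   The first is invariant under realignment, and realigning SD gives S D'
   with D' built from the transposed blocks U_j^T, so both SD and DS are
   dual-unitary as products of unitaries.  The same entries give the two
   formulas for M_+; in particular M_+^{DS} is diagonal in the basis of
   matrix units, with eigenvalue lam_{jk} on E_{jk}, and
   lam_{jj} = tr(U_j^dagger U_j)/q = 1. *)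

Section MxvecIndex.
Variables m n : nat.

Lemma eq_mxvec_index (i i' : 'I_m) (j j' : 'I_n) :
  (mxvec_index i j == mxvec_index i' j') = (i == i') && (j == j').
Proof.
by rewrite (inj_eq (@cast_ord_inj _ _ _)) (inj_eq enum_rank_inj) xpair_eqE.
Qed.

Lemma big_mxvec_index (R : Type) (idx : R) (op : Monoid.com_law idx)
    (F : 'I_(m * n) -> R) :
  \big[op/idx]_k F k = \big[op/idx]_i \big[op/idx]_j F (mxvec_index i j).
Proof.
rewrite (reindex _ (curry_mxvec_bij _ _)) /= pair_big /=.
by apply: eq_bigr => -[i j].
Qed.

Lemma lin_mx_mxvec_indexE (R : pzRingType) (f : 'M[R]_(m, n) -> 'M[R]_(m, n))
    (i i' : 'I_m) (j j' : 'I_n) :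
  lin_mx f (mxvec_index i j) (mxvec_index i' j') = f (delta_mx i j) i' j'.
Proof. by rewrite mxE /= vec_mx_delta mxvecE. Qed.

Lemma char_poly_lin_mx_entrywise (R : comNzRingType)
    (f : 'M[R]_(m, n) -> 'M[R]_(m, n)) (lam : 'I_m -> 'I_n -> R) :
  (forall a i j, f a i j = lam i j * a i j) ->
  char_poly (lin_mx f) = \prod_i \prod_j ('X - (lam i j)%:P).
Proof.
move=> fE; rewrite char_poly_trig; last first.
  apply/is_trig_mxP => u v lt_uv; have : u != v by rewrite neq_ltn lt_uv.
  case/mxvec_indexP: u {lt_uv} => i j; case/mxvec_indexP: v => i' j'.
  rewrite eq_mxvec_index negb_and lin_mx_mxvec_indexE fE mxE.
  by case/orP=> /negbTE neq; rewrite (eq_sym i') (eq_sym j') neq ?andbF mulr0.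
rewrite big_mxvec_index; apply: eq_bigr => i _; apply: eq_bigr => j _.
by rewrite lin_mx_mxvec_indexE fE mxE !eqxx mulr1.
Qed.

End MxvecIndex.

Section NestedSums.
Variables (R : nmodType) (m n : nat).

Lemma summx2E (I J : finType) (F : I -> J -> 'M[R]_(m, n)) u v :
  (\sum_i \sum_j F i j) u v = \sum_i \sum_j F i j u v.
Proof. by rewrite summxE; apply: eq_bigr => i _; rewrite summxE. Qed.

Lemma summx3E (I J K : finType) (F : I -> J -> K -> 'M[R]_(m, n)) u v :
  (\sum_i \sum_j \sum_k F i j k) u v = \sum_i \sum_j \sum_k F i j k u v.
Proof. by rewrite summxE; apply: eq_bigr => i _; rewrite summx2E. Qed.

Lemma summx4E (I J K L : finType) (F : I -> J -> K -> L -> 'M[R]_(m, n)) u v :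
  (\sum_i \sum_j \sum_k \sum_l F i j k l) u v
  = \sum_i \sum_j \sum_k \sum_l F i j k l u v.
Proof. by rewrite summxE; apply: eq_bigr => i _; rewrite summx3E. Qed.

End NestedSums.

Lemma mxtrace_adjmul_unitary (C : numClosedFieldType) n (U : 'M[C]_n) :
  U \is unitarymx -> \tr (U ^t* *m U) = n%:R.
Proof. by move=> Uu; rewrite -[U ^t*]mul1mx mulmxKtV // mxtrace1. Qed.

Lemma leq_card_diag (T : finType) (P : pred (T * T)) :
  (forall t, P (t, t)) -> (#|T| <= #|[set p | P p]|)%N.
Proof.
move=> Pdiag; have diag_inj : injective (fun t : T => (t, t)) by move=> ? ? [].
rewrite -cardsT -(card_imset _ diag_inj).
by apply: subset_leq_card; apply/subsetP => _ /imsetP[t _ ->]; rewrite inE.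
Qed.

Section TensorEntries.
Variables (C : numClosedFieldType) (q : nat).
Implicit Types (Us : 'I_q -> 'M[C]_q) (x : 'M[C]_q) (X Y : 'M[C]_(q * q)).

Local Notation S := (swapmx C q).

Lemma eq_kidx (i a j b : 'I_q) : (kidx i a == kidx j b) = (i == j) && (a == b).
Proof. exact: eq_mxvec_index. Qed.

Lemma delta_kidxE (i a j b u v w z : 'I_q) :
  (delta_mx (kidx i a) (kidx j b) : 'M[C]_(q * q)) (kidx u v) (kidx w z)
  = ((u == i) && (v == a) && (w == j) && (z == b))%:R.
Proof. by rewrite mxE !eq_kidx !andbA. Qed.

Lemma mulmx_kidxE X Y (i a j b : 'I_q) :
  (X *m Y) (kidx i a) (kidx j b)
  = \sum_e \sum_f X (kidx i a) (kidx e f) * Y (kidx e f) (kidx j b).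
Proof. by rewrite mxE big_mxvec_index. Qed.

(* [collapse_at v] keeps only the term [v] of the outermost sum: every other
   term contains a Kronecker factor comparing [v] with a distinct index. *)
Ltac vanish :=
  let y := fresh in let ne_y := fresh in let ne_y' := fresh in
  move=> y ne_y _; have ne_y' := ne_y; rewrite eq_sym in ne_y';
  repeat (apply: big1 => ? _);
  rewrite ?(negbTE ne_y) ?(negbTE ne_y') /= ?andbF ?andFb
          ?(mulr0, mul0r, conjC0, scale0r) //.
Ltac collapse_at v := rewrite (big_only1 v) //; last by vanish.

Lemma swapmxE (i a j b : 'I_q) :
  S (kidx i a) (kidx j b) = ((j == a) && (b == i))%:R.
Proof.
rewrite summx2E; under eq_bigr do under eq_bigr do rewrite delta_kidxE.
by collapse_at a; collapse_at i; rewrite !eqxx.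
Qed.

Lemma tens_idE x (i a j b : 'I_q) :
  tens_id x (kidx i a) (kidx j b) = x i j * (b == a)%:R.
Proof.
rewrite summx3E.
under eq_bigr do under eq_bigr do under eq_bigr do rewrite mxE delta_kidxE.
by collapse_at i; collapse_at j; collapse_at a; rewrite !eqxx.
Qed.

Lemma blockdiagE Us (i a j b : 'I_q) :
  blockdiag Us (kidx i a) (kidx j b) = (i == j)%:R * Us i a b.
Proof.
rewrite summx3E.
under eq_bigr do under eq_bigr do under eq_bigr do rewrite mxE delta_kidxE.
have [<-|ne_ij] := eqVneq i j.
  by collapse_at i; collapse_at a; collapse_at b; rewrite !eqxx mulr1 mul1r.
rewrite mul0r; do 3!(apply: big1 => ? _).
by case: eqVneq => [<-|_]; rewrite /= ?(eq_sym j) ?(negbTE ne_ij) ?andbF mulr0.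
Qed.

Lemma realignE X (i a j b : 'I_q) :
  realign X (kidx b a) (kidx j i) = X (kidx i a) (kidx j b).
Proof.
rewrite summx4E; under eq_bigr do under eq_bigr do under eq_bigr do
  under eq_bigr do rewrite mxE delta_kidxE.
by collapse_at i; collapse_at a; collapse_at j; collapse_at b; rewrite !eqxx mulr1.
Qed.

Lemma blockdiag_swapmxE Us (m c n d : 'I_q) :
  (blockdiag Us *m S) (kidx m c) (kidx n d) = (d == m)%:R * Us m c n.
Proof.
rewrite mulmx_kidxE.
under eq_bigr do under eq_bigr do rewrite blockdiagE swapmxE.
collapse_at m; collapse_at n; rewrite !eqxx mul1r.
by case: (d == m); rewrite /= ?mulr1 ?mulr0 ?mul1r ?mul0r.
Qed.

Lemma swapmx_blockdiagE Us (m c n d : 'I_q) :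
  (S *m blockdiag Us) (kidx m c) (kidx n d) = (c == n)%:R * Us c m d.
Proof.
rewrite mulmx_kidxE.
under eq_bigr do under eq_bigr do rewrite blockdiagE swapmxE.
by collapse_at c; collapse_at m; rewrite !eqxx mul1r.
Qed.

Lemma swapmx_unitary : S \is unitarymx.
Proof.
apply/unitarymxP/matrixP => u v.
case/mxvec_indexP: u => i a; case/mxvec_indexP: v => j b.
rewrite mulmx_kidxE; under eq_bigr do under eq_bigr do rewrite !mxE !swapmxE.
collapse_at a; collapse_at i.
by rewrite !mxE eq_kidx !eqxx mul1r conjC_nat andbC.
Qed.

Lemma blockdiag_unitary Us :
  (forall j, Us j \is unitarymx) -> blockdiag Us \is unitarymx.
Proof.
move=> Uu; apply/unitarymxP/matrixP => u v.
case/mxvec_indexP: u => i a; case/mxvec_indexP: v => j b.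
rewrite mulmx_kidxE; under eq_bigr do under eq_bigr do rewrite !mxE !blockdiagE.
collapse_at i; rewrite !mxE eq_kidx eqxx.
have [<-|ne_ij] := eqVneq i j.
  have /unitarymxP/matrixP/(_ a b) := Uu i; rewrite !mxE => <-.
  by apply: eq_bigr => f _; rewrite !mxE !mul1r.
by apply: big1 => f _; rewrite mul0r conjC0 mulr0.
Qed.

Lemma realign_swapmx_blockdiag Us :
  realign (S *m blockdiag Us) = S *m blockdiag (fun j => (Us j)^T).
Proof.
apply/matrixP => u v.
case/mxvec_indexP: u => b a; case/mxvec_indexP: v => j i.
rewrite realignE swapmx_blockdiagE mulmx_kidxE.
under eq_bigr do under eq_bigr do rewrite swapmxE blockdiagE.
by collapse_at a; collapse_at b; rewrite !eqxx mxE mul1r.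
Qed.

Lemma realign_blockdiag_swapmx Us :
  realign (blockdiag Us *m S) = blockdiag Us *m S.
Proof.
apply/matrixP => u v.
case/mxvec_indexP: u => b a; case/mxvec_indexP: v => j i.
by rewrite realignE !blockdiag_swapmxE; case: eqVneq => [->|]; rewrite ?mul0r.
Qed.

Lemma dual_unitary_swapmx_blockdiag Us :
  (forall j, Us j \is unitarymx) -> dual_unitary (S *m blockdiag Us).
Proof.
move=> Uu; rewrite /dual_unitary realign_swapmx_blockdiag.
by split; apply: mul_unitarymx; [exact: swapmx_unitary | exact: blockdiag_unitary
  | exact: swapmx_unitary | apply: blockdiag_unitary => j; rewrite trmx_unitary].
Qed.

Lemma dual_unitary_blockdiag_swapmx Us :
  (forall j, Us j \is unitarymx) -> dual_unitary (blockdiag Us *m S).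
Proof.
move=> Uu; rewrite /dual_unitary realign_blockdiag_swapmx.
suff DSu : blockdiag Us *m S \is unitarymx by [].
by apply: mul_unitarymx; [exact: blockdiag_unitary | exact: swapmx_unitary].
Qed.

Lemma MplusE X x (al be : 'I_q) :
  Mplus X x al be = q%:R^-1 * \sum_i \sum_n \sum_d
    (\sum_m (X (kidx m d) (kidx i al))^* * x m n) * X (kidx n d) (kidx i be).
Proof.
rewrite !mxE; congr (_ * _); apply: eq_bigr => i _.
rewrite mulmx_kidxE; apply: eq_bigr => n _; apply: eq_bigr => d _.
rewrite mulmx_kidxE; congr (_ * _); apply: eq_bigr => m _.
under eq_bigr do rewrite !mxE tens_idE.
by collapse_at d; rewrite eqxx mulr1.
Qed.

Lemma Mplus_blockdiag_swapmx Us x (j k : 'I_q) :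
  Mplus (blockdiag Us *m S) x j k = q%:R^-1 * \tr (Us j ^t* *m Us k) * x j k.
Proof.
rewrite MplusE -mulrA mulr_suml; congr (_ * _); apply: eq_bigr => i _.
rewrite !mxE mulr_suml.
under eq_bigr do under eq_bigr do rewrite blockdiag_swapmxE.
collapse_at k; apply: eq_bigr => d _; rewrite eqxx mul1r.
under eq_bigr do rewrite blockdiag_swapmxE.
by collapse_at j; rewrite eqxx !mxE mul1r mulrAC.
Qed.

Lemma Mplus_swapmx_blockdiag Us x :
  Mplus (S *m blockdiag Us) x = q%:R^-1 *: \sum_(j < q) (Us j ^t* *m x *m Us j).
Proof.
apply/matrixP => al be; rewrite MplusE mxE summxE; congr (_ * _).
apply: eq_bigr => i _; rewrite mxE; apply: eq_bigr => n _.
under eq_bigr do rewrite swapmx_blockdiagE.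
collapse_at i; rewrite eqxx mul1r !mxE; congr (_ * _).
by apply: eq_bigr => m _; rewrite swapmx_blockdiagE eqxx mul1r !mxE.
Qed.

End TensorEntries.

Theorem mainTheorem6 (C : numClosedFieldType) (q : nat) (hq : (2 <= q)%N)
  (Us : 'I_q -> 'M[C]_q) (hU : forall j, Us j \is unitarymx) :
  let D := blockdiag Us in
  let S := swapmx C q in
  let lam := fun j k : 'I_q => q%:R^-1 * \tr (Us j ^t* *m Us k) in
  [/\ dual_unitary (S *m D), dual_unitary (D *m S),
      (forall (a : 'M[C]_q) (j k : 'I_q),
          Mplus (D *m S) a j k = lam j k * a j k),
      (forall a : 'M[C]_q,
          Mplus (S *m D) a = q%:R^-1 *: (\sum_(j < q) (Us j ^t* *m a *m Us j)))
    & [/\ char_poly (lin_mx (Mplus (D *m S))) =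
          \prod_(j < q) \prod_(k < q) ('X - (lam j k)%:P),
        (q <= #|[set p : 'I_q * 'I_q | lam p.1 p.2 == 1%R]|)%N
      & ((forall j k : 'I_q, j != k -> \tr (Us j ^t* *m Us k) = 0) ->
        forall j k : 'I_q, j != k -> lam j k = 0)]].
Proof.
move=> D S lam.
have MplusDS a j k : Mplus (D *m S) a j k = lam j k * a j k.
  exact: Mplus_blockdiag_swapmx.
have lam_diag j : lam j j = 1.
  have q_neq0 : q%:R != 0 :> C by rewrite pnatr_eq0 -lt0n (leq_trans _ hq).
  by rewrite /lam mxtrace_adjmul_unitary // mulVf.
split.
- exact: dual_unitary_swapmx_blockdiag.
- exact: dual_unitary_blockdiag_swapmx.
- exact: MplusDS.
- exact: Mplus_swapmx_blockdiag.
split.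
- exact: char_poly_lin_mx_entrywise.
- rewrite -[X in (X <= _)%N]card_ord.
  apply: (@leq_card_diag _ (fun p : 'I_q * 'I_q => lam p.1 p.2 == 1)) => j.
  by rewrite lam_diag.
- by move=> orth j k ne_jk; rewrite /lam orth // mulr0.
Qed.
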